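(* Let $\mathcal{M}$ be the collection of all sets of reductions $\mathcal{F}$ with $\mathsf{Lip}\subseteq\mathcal{F}\subseteq\mathsf{Bor}$ such that $\Delta_{\mathcal{F}}$ is closed under finite intersections. The map $\mathcal{F}\mapsto\mathcal{F}^*$ sends every $\mathcal{F}\in\mathcal{M}$ to a Borel-amenable set of reductions, is a surjection of $\mathcal{M}$ onto $\mathsf{BAR}$, and: (i) $\mathcal{F}^*=\mathcal{F}$ for every $\mathcal{F}\in\mathsf{BAR}$; (ii) for every $\mathcal{F}\in\mathcal{M}$, $\mathcal{F}^*$ is the minimal (with respect to inclusion) Borel-amenable set of reductions containing $\mathcal{F}$.
   Context: Base theory $\mathsf{ZF}+\mathsf{AC}_\omega(\mathbb{R})$. $\mathbb{R}={}^\omega\omega$ with metric $d(x,y)=2^{-n}$, $n$ least with $x(n)\ne y(n)$; $\mathbf{N}_s=\{x:s\subseteq x\}$. $\mathsf{Lip}(C)$: functions with $d(f(x),f(y))\le Cd(x,y)$; $\mathsf{Lip}=\bigcup_{k\in\mathbb{Z}}\mathsf{Lip}(2^k)$; $\mathsf{L}=\mathsf{Lip}(1)$; $\mathsf{Bor}$ is the set of Borel functions $\mathbb{R}\to\mathbb{R}$. A set of reductions is a set $\mathcal{F}$ of functions $\mathbb{R}\to\mathbb{R}$ closed under composition, containing $\mathsf{L}$, with a surjection $\mathbb{R}\twoheadrightarrow\mathcal{F}$. $A\le_{\mathcal{F}}B$ iff $A=f^{-1}(B)$ for some $f\in\mathcal{F}$; $\Delta_{\mathcal{F}}=\{A:A\le_{\mathcal{F}}\mathbf{N}_{\langle0\rangle}\}$;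 a $\Delta_{\mathcal{F}}$-partition of $\mathbb{R}$ is a sequence $\langle D_n:n\in\omega\rangle$ of pairwise disjoint sets in $\Delta_{\mathcal{F}}$ with union $\mathbb{R}$. A set of reductions $\mathcal{F}\subseteq\mathsf{Bor}$ is Borel-amenable if $\mathsf{Lip}\subseteq\mathcal{F}$ and $\bigcup_n(f_n\restriction D_n)\in\mathcal{F}$ for every $\Delta_{\mathcal{F}}$-partition $\langle D_n\rangle$ and every $\{f_n\}\subseteq\mathcal{F}$; $\mathsf{BAR}$ is the collection of Borel-amenable sets of reductions. For $\mathcal{F}\in\mathcal{M}$, $\mathcal{F}^*=\{\bigcup_{n\in\omega}(f_n\restriction D_n): f_n\in\mathcal{F}\text{ for all }n,\ \langle D_n\rangle\text{ a }\Delta_{\mathcal{F}}\text{-partition of }\mathbb{R}\}$. *)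

From Stdlib Require Import Reals Lra ZArith List ClassicalEpsilon ConstructiveEpsilon Arith.
Open Scope R_scope.

Definition Baire := nat -> nat.

Definition first_diff (x y : Baire) (H : exists n, x n <> y n) : nat :=
  proj1_sig (epsilon_smallest (fun n => x n <> y n)
               (fun n => match Nat.eq_dec (x n) (y n) with
                         | left e => right (fun h => h e)
                         | right ne => left ne end) H).

Definition d (x y : Baire) : R :=
  match excluded_middle_informative (exists n, x n <> y n) with
  | left H => / 2 ^ (first_diff x y H)
  | right _ => 0
  end.

Definition N (s : list nat) : Baire -> Prop :=
  fun x => forall i, (i < length s)%nat -> x i = nth i s 0%nat.

Inductive borel : (Baire -> Prop) -> Prop :=
  | borel_basic : forall s, borel (N s)
  | borel_compl : forall A, borel A -> borel (fun x => ~ A x)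
  | borel_cunion : forall A : nat -> Baire -> Prop,
      (forall n, borel (A n)) -> borel (fun x => exists n, A n x).

Definition fset := (Baire -> Baire) -> Prop.
Definition fsubset (F G : fset) : Prop := forall f, F f -> G f.
Definition fseteq (F G : fset) : Prop := forall f, F f <-> G f.

Definition Bor : fset :=
  fun f => forall B, borel B -> borel (fun x => B (f x)).

Definition Lip_C (C : R) : fset :=
  fun f => forall x y, d (f x) (f y) <= C * d x y.

Definition Lip : fset := fun f => exists k : Z, Lip_C (powerRZ 2 k) f.
Definition L : fset := Lip_C 1.

Definition set_of_reductions (F : fset) : Prop :=
  (forall f g, F f -> F g -> F (fun x => f (g x))) /\
  fsubset L F /\
  (exists e : Baire -> (Baire -> Baire),
      (forall x, F (e x)) /\ (forall f, F f -> exists x, e x = f)).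

Definition reducible (F : fset) (A B : Baire -> Prop) : Prop :=
  exists f, F f /\ forall x, A x <-> B (f x).

Definition Delta (F : fset) (A : Baire -> Prop) : Prop :=
  reducible F A (N (0%nat :: nil)).

Definition Delta_partition (F : fset) (D : nat -> Baire -> Prop) : Prop :=
  (forall n, Delta F (D n)) /\
  (forall n m x, n <> m -> D n x -> D m x -> False) /\
  (forall x, exists n, D n x).

Definition is_glue (D : nat -> Baire -> Prop) (f : nat -> Baire -> Baire)
  (g : Baire -> Baire) : Prop :=
  forall n x, D n x -> g x = f n x.

Definition borel_amenable (F : fset) : Prop :=
  set_of_reductions F /\ fsubset F Bor /\ fsubset Lip F /\
  (forall D f g, Delta_partition F D -> (forall n, F (f n)) -> is_glue D f g -> F g).

Definition BAR (F : fset) : Prop := borel_amenable F.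

Definition M (F : fset) : Prop :=
  set_of_reductions F /\ fsubset Lip F /\ fsubset F Bor /\
  (forall A B, Delta F A -> Delta F B -> Delta F (fun x => A x /\ B x)).

Definition Fstar (F : fset) : fset :=
  fun g => exists (D : nat -> Baire -> Prop) (f : nat -> Baire -> Baire),
    Delta_partition F D /\ (forall n, F (f n)) /\ is_glue D f g.

(* Every step is a reindexing of countable gluings.  Composing, or gluing along
   a Delta_{F^*}-partition, functions that are themselves gluings of members of
   F along Delta_F-partitions is again such a gluing, along the common
   refinement of the partitions involved; the pieces of that refinement are in
   Delta_F because Delta_F is closed under finite intersections and under
   preimages by members of F.  A Borel-amenable G conversely has Delta_G
   closed under intersections (A /\ B reduces to N_<0> by gluing a reduction
   of B on A with a constant on its complement), and G^* = G. *)

From Pilot Require Import Defs.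
From Stdlib Require Import Reals Lra Lia Cantor Classical ClassicalEpsilon ConstructiveEpsilon
  FunctionalExtensionality PropExtensionality.
Import Defs.
Open Scope R_scope.

Definition N0 : Baire -> Prop := N (cons 0%nat nil).

Lemma N0_iff x : N0 x <-> x 0%nat = 0%nat.
Proof.
  split; intro H.
  - apply (H 0%nat). simpl; lia.
  - intros i Hi. simpl in Hi. replace i with 0%nat by lia. exact H.
Qed.

Lemma first_diff_spec x y H :
  x (first_diff x y H) <> y (first_diff x y H) /\
  forall k, x k <> y k -> (first_diff x y H <= k)%nat.
Proof. unfold first_diff. destruct epsilon_smallest as [n [Hn Hm]]. simpl. auto. Qed.

Lemma d_nonneg x y : 0 <= d x y.
Proof.
  unfold d. destruct excluded_middle_informative; [|lra].
  left. apply Rinv_0_lt_compat, pow_lt; lra.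
Qed.

Lemma d_refl x : d x x = 0.
Proof.
  unfold d. destruct excluded_middle_informative as [[n H]|]; [exfalso|]; auto.
Qed.

Lemma d_le_of_agree u v x y : (forall n, x n = y n -> u n = v n) -> d u v <= d x y.
Proof.
  intro E. unfold d.
  destruct (excluded_middle_informative (exists n, u n <> v n)) as [H1|H1];
  destruct (excluded_middle_informative (exists n, x n <> y n)) as [H2|H2].
  - destruct (first_diff_spec u v H1) as [a1 _].
    destruct (first_diff_spec x y H2) as [_ b2].
    assert (Hle : (first_diff x y H2 <= first_diff u v H1)%nat).
    { apply b2. intro Hc. apply a1, E, Hc. }
    apply Rinv_le_contravar; [apply pow_lt; lra|apply Rle_pow; lra || auto].
  - exfalso. destruct H1 as [n Hn]. apply H2. exists n. intro Hc. apply Hn, E, Hc.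
  - left. apply Rinv_0_lt_compat, pow_lt; lra.
  - lra.
Qed.

Lemma L_const c : L (fun _ => c).
Proof. intros x y. rewrite d_refl. pose proof (d_nonneg x y). lra. Qed.

Lemma L_id : L (fun x => x).
Proof. intros x y. lra. Qed.

(* Flips membership in N0 and changes nothing else, so it reduces complements. *)
Definition flip0 (x : Baire) : Baire :=
  fun n => match n with 0%nat => if Nat.eqb (x 0%nat) 0 then 1%nat else 0%nat | _ => x n end.

Lemma L_flip0 : L flip0.
Proof.
  intros x y. rewrite Rmult_1_l. apply d_le_of_agree.
  intros [|n] H; simpl; [rewrite H|]; auto.
Qed.

Lemma N0_flip0 x : N0 (flip0 x) <-> ~ N0 x.
Proof.
  rewrite !N0_iff. simpl. destruct (x 0%nat); simpl; intuition discriminate.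
Qed.

Lemma borel_ext A B : (forall x, A x <-> B x) -> borel A -> borel B.
Proof.
  intros H HA. replace B with A; [exact HA|].
  apply functional_extensionality; intro x; apply propositional_extensionality; auto.
Qed.

Lemma borel_or A B : borel A -> borel B -> borel (fun x => A x \/ B x).
Proof.
  intros HA HB.
  apply (borel_ext (fun x => exists n, (match n with 0%nat => A | _ => B end) x)).
  - intro x. split.
    + intros [[|n] H]; auto.
    + intros [H|H]; [exists 0%nat|exists 1%nat]; auto.
  - apply borel_cunion. intros [|n]; auto.
Qed.

Lemma borel_and A B : borel A -> borel B -> borel (fun x => A x /\ B x).
Proof.
  intros HA HB. apply (borel_ext (fun x => ~ (~ A x \/ ~ B x))).
  - intro x. tauto.
  - apply borel_compl, borel_or; apply borel_compl; assumption.
Qed.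

Lemma borel_of_Delta F A : fsubset F Bor -> Delta F A -> borel A.
Proof.
  intros HB [a [Fa Ha]]. apply (borel_ext (fun x => N0 (a x))).
  - intro x. rewrite Ha. reflexivity.
  - apply (HB a Fa), borel_basic.
Qed.

Definition partition (D : nat -> Baire -> Prop) : Prop :=
  (forall n m x, n <> m -> D n x -> D m x -> False) /\ (forall x, exists n, D n x).

Definition two_pieces (A : Baire -> Prop) : nat -> Baire -> Prop :=
  fun n x => match n with 0%nat => A x | 1%nat => ~ A x | _ => False end.

Lemma partition_two_pieces A : partition (two_pieces A).
Proof.
  split.
  - intros [|[|n]] [|[|m]] x ne; simpl; tauto.
  - intro x. destruct (classic (A x)); [exists 0%nat|exists 1%nat]; assumption.
Qed.

Definition glue (D : nat -> Baire -> Prop) (f : nat -> Baire -> Baire) (H : forall x, exists n, D n x) :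
  Baire -> Baire :=
  fun x => f (proj1_sig (ClassicalEpsilon.constructive_indefinite_description (fun n => D n x) (H x))) x.

Lemma is_glue_glue D f H :
  (forall n m x, n <> m -> D n x -> D m x -> False) -> is_glue D f (glue D f H).
Proof.
  intros Hd n x Hn. unfold glue.
  destruct ClassicalEpsilon.constructive_indefinite_description as [m Hm]. simpl.
  destruct (Nat.eq_dec m n) as [->|ne]; [reflexivity|].
  exfalso; exact (Hd m n x ne Hm Hn).
Qed.

Lemma is_glue_unique D f g g' :
  (forall x, exists n, D n x) -> is_glue D f g -> is_glue D f g' -> g = g'.
Proof.
  intros Hc Hg Hg'. apply functional_extensionality. intro x.
  destruct (Hc x) as [n Hn]. rewrite (Hg n x Hn), (Hg' n x Hn). reflexivity.
Qed.

Definition flat {A : Type} (Q : nat -> nat -> A) : nat -> A :=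
  fun k => Q (fst (of_nat k)) (snd (of_nat k)).

Definition unflat {A : Type} (q : nat -> A) : nat -> nat -> A :=
  fun i j => q (to_nat (i, j)).

Lemma flat_to_nat {A : Type} (Q : nat -> nat -> A) i j : flat Q (to_nat (i, j)) = Q i j.
Proof. unfold flat. rewrite cancel_of_to. reflexivity. Qed.

Lemma unflat_flat {A : Type} (Q : nat -> nat -> A) : unflat (flat Q) = Q.
Proof.
  apply functional_extensionality; intro i. apply functional_extensionality; intro j.
  apply flat_to_nat.
Qed.

Lemma partition_flat (Q : nat -> nat -> Baire -> Prop) :
  (forall i j i' j' x, (i, j) <> (i', j') -> Q i j x -> Q i' j' x -> False) ->
  (forall x, exists i j, Q i j x) ->
  partition (flat Q).
Proof.
  intros Hd Hc. split.
  - intros k k' x ne. apply Hd.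
    rewrite <- !surjective_pairing. intro e.
    apply ne. rewrite <- (cancel_to_of k), <- (cancel_to_of k'), e. reflexivity.
  - intro x. destruct (Hc x) as [i [j H]].
    exists (to_nat (i, j)). rewrite flat_to_nat. exact H.
Qed.

Definition Delta_inter_closed (F : fset) : Prop :=
  forall A B, Delta F A -> Delta F B -> Delta F (fun x => A x /\ B x).

Lemma Delta_mono F G A : fsubset F G -> Delta F A -> Delta G A.
Proof. intros S [a [Fa Ha]]. exists a. auto. Qed.

Section Reductions.

Variable F : fset.
Hypothesis HF : set_of_reductions F.

Lemma reduction_comp f g : F f -> F g -> F (fun x => f (g x)).
Proof. apply (proj1 HF). Qed.

Lemma reduction_L f : L f -> F f.
Proof. apply (proj1 (proj2 HF)). Qed.

Lemma Delta_preimage A h : Delta F A -> F h -> Delta F (fun x => A (h x)).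
Proof.
  intros [a [Fa Ha]] Fh. exists (fun x => a (h x)).
  split; [apply reduction_comp; assumption|]. intro x; apply Ha.
Qed.

Lemma Delta_compl A : Delta F A -> Delta F (fun x => ~ A x).
Proof.
  intros [a [Fa Ha]]. exists (fun x => flip0 (a x)). split.
  - apply reduction_comp; [apply reduction_L, L_flip0|assumption].
  - intro x. rewrite Ha. symmetry. apply N0_flip0.
Qed.

Lemma Delta_const (P : Prop) : Delta F (fun _ => P).
Proof.
  destruct (classic P) as [H|H].
  - exists (fun _ _ => 0%nat). split; [apply reduction_L, L_const|].
    intro x. rewrite N0_iff. tauto.
  - exists (fun _ _ => 1%nat). split; [apply reduction_L, L_const|].
    intro x. rewrite N0_iff. split; [tauto|discriminate].
Qed.

Lemma Delta_partition_two_pieces A : Delta F A -> Delta_partition F (two_pieces A).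
Proof.
  intro HA. split; [|apply partition_two_pieces].
  intros [|[|n]]; [exact HA|apply Delta_compl, HA|apply Delta_const].
Qed.

Lemma Delta_partition_preimage D h :
  Delta_partition F D -> F h -> Delta_partition F (fun n x => D n (h x)).
Proof.
  intros [HD [Hd Hc]] Fh. split; [|split].
  - intro n. apply Delta_preimage; auto.
  - intros n m x. apply Hd.
  - intro x. apply Hc.
Qed.

Lemma Fstar_of_mem : fsubset F (Fstar F).
Proof.
  intros f Ff. exists (two_pieces (fun _ => True)), (fun _ => f).
  split; [|split].
  - apply Delta_partition_two_pieces, Delta_const.
  - auto.
  - intros n x _. reflexivity.
Qed.

Lemma Fstar_comp_right f h : Fstar F f -> F h -> Fstar F (fun x => f (h x)).
Proof.
  intros [D [fs [HD [Hfs Hf]]]] Fh.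
  exists (fun n x => D n (h x)), (fun n x => fs n (h x)). split; [|split].
  - apply Delta_partition_preimage; assumption.
  - intro n. apply reduction_comp; auto.
  - intros n x Hx. apply Hf, Hx.
Qed.

Hypothesis HI : Delta_inter_closed F.

Lemma Delta_partition_refine P (Q : nat -> nat -> Baire -> Prop) :
  Delta_partition F P -> (forall i, Delta_partition F (Q i)) ->
  Delta_partition F (flat (fun i j x => P i x /\ Q i j x)).
Proof.
  intros [HP [Pd Pc]] HQ. split; [|apply partition_flat].
  - intro k. apply HI; [apply HP|apply HQ].
  - intros i j i' j' x ne [Hp Hq] [Hp' Hq'].
    destruct (Nat.eq_dec i i') as [<-|e]; [|exact (Pd _ _ x e Hp Hp')].
    assert (nj : j <> j') by congruence.
    exact (proj1 (proj2 (HQ i)) _ _ x nj Hq Hq').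
  - intro x. destruct (Pc x) as [i Hi]. destruct (proj2 (proj2 (HQ i)) x) as [j Hj].
    exists i, j. auto.
Qed.

Lemma Fstar_glue_Delta P fs g :
  Delta_partition F P -> (forall n, Fstar F (fs n)) -> is_glue P fs g -> Fstar F g.
Proof.
  intros HP Hfs Hg.
  assert (Hrep : forall n, exists Qu : (nat -> Baire -> Prop) * (nat -> Baire -> Baire),
    Delta_partition F (fst Qu) /\ (forall m, F (snd Qu m)) /\ is_glue (fst Qu) (snd Qu) (fs n)).
  { intro n. destruct (Hfs n) as [Q [u H]]. exists (Q, u). exact H. }
  destruct (choice _ Hrep) as [rep Hrep'].
  exists (flat (fun i j x => P i x /\ fst (rep i) j x)), (flat (fun i => snd (rep i))).
  split; [|split].
  - apply Delta_partition_refine; [exact HP|]. intro i. apply Hrep'.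
  - intro k. apply Hrep'.
  - intros k x [Hp Hq]. rewrite (Hg _ _ Hp). apply (Hrep' _), Hq.
Qed.

Lemma Fstar_comp f g : Fstar F f -> Fstar F g -> Fstar F (fun x => f (g x)).
Proof.
  intros Hf [E [gs [HE [Hgs Hg]]]].
  apply (Fstar_glue_Delta E (fun i x => f (gs i x))); [exact HE| |].
  - intro i. apply Fstar_comp_right; auto.
  - intros i x Hx. rewrite (Hg _ _ Hx). reflexivity.
Qed.

(* The pieces are those of the partition gluing a reduction of A, each
   intersected with the preimage of N0 under the function glued on it. *)
Lemma Delta_Fstar_disjoint_union A :
  Delta (Fstar F) A ->
  exists P : nat -> Baire -> Prop, (forall k, Delta F (P k)) /\
    (forall k k' x, k <> k' -> P k x -> P k' x -> False) /\
    (forall x, A x <-> exists k, P k x).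
Proof.
  intros [a [[E [h [[HE [Ed Ec]] [Hh Ha]]]] HA]].
  exists (fun k x => E k x /\ N0 (h k x)). split; [|split].
  - intro k. apply HI; [apply HE|]. exists (h k). split; [apply Hh|reflexivity].
  - intros k k' x ne [H _] [H' _]. exact (Ed _ _ x ne H H').
  - intro x. rewrite HA. split.
    + intro Hx. destruct (Ec x) as [k Hk]. exists k. rewrite <- (Ha _ _ Hk). auto.
    + intros [k [Hk Hx]]. rewrite (Ha _ _ Hk). exact Hx.
Qed.

Lemma Fstar_glue D fs g :
  Delta_partition (Fstar F) D -> (forall n, Fstar F (fs n)) -> is_glue D fs g ->
  Fstar F g.
Proof.
  intros [HD [Dd Dc]] Hfs Hg.
  destruct (choice _ (fun n => Delta_Fstar_disjoint_union _ (HD n))) as [P HP].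
  apply (Fstar_glue_Delta (flat P) (flat (fun i _ => fs i))).
  - split; [intro k; apply HP|apply partition_flat].
    + intros i j i' j' x ne H H'.
      destruct (Nat.eq_dec i i') as [<-|e].
      * assert (nj : j <> j') by congruence. exact (proj1 (proj2 (HP i)) _ _ x nj H H').
      * apply (Dd _ _ x e); [apply (HP i)|apply (HP i')]; eauto.
    + intro x. destruct (Dc x) as [i Hi]. apply (HP i) in Hi. destruct Hi as [j Hj].
      exists i, j. exact Hj.
  - intro k. apply Hfs.
  - intros k x Hx. apply Hg, (HP _). exists (snd (of_nat k)). exact Hx.
Qed.

End Reductions.

Lemma Fstar_Bor F : fsubset F Bor -> fsubset (Fstar F) Bor.
Proof.
  intros HB g [D [fs [[HD [_ Dc]] [Hfs Hg]]]] B bB.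
  apply (borel_ext (fun x => exists n, D n x /\ B (fs n x))).
  - intro x. split.
    + intros [n [Hn HBn]]. rewrite (Hg _ _ Hn). exact HBn.
    + intro H. destruct (Dc x) as [n Hn]. exists n. rewrite <- (Hg _ _ Hn). auto.
  - apply borel_cunion. intro n. apply borel_and.
    + apply (borel_of_Delta F); auto.
    + apply (HB _ (Hfs n)), bB.
Qed.

Section Enumeration.

Variable F : fset.
Hypothesis HF : set_of_reductions F.
Variable e : Baire -> (Baire -> Baire).
Hypothesis He : forall x, F (e x).
Hypothesis He_onto : forall f, F f -> exists x, e x = f.

(* A code x lists, through its rows 0 and 1, codes of reductions of the pieces
   and codes of the functions glued on them; invalid codes decode to the
   identity. *)
Definition code_piece (x : Baire) : nat -> Baire -> Prop :=
  fun n y => N0 (e (unflat (unflat x 0%nat) n) y).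

Definition code_fun (x : Baire) : nat -> Baire -> Baire :=
  fun n => e (unflat (unflat x 1%nat) n).

Definition decode (x : Baire) : Baire -> Baire :=
  match excluded_middle_informative (partition (code_piece x)) with
  | left H => glue (code_piece x) (code_fun x) (proj2 H)
  | right _ => fun y => y
  end.

Lemma decode_Fstar x : Fstar F (decode x).
Proof.
  unfold decode. destruct excluded_middle_informative as [H|H].
  - exists (code_piece x), (code_fun x). split; [|split].
    + split; [|exact H]. intro n. exists (e (unflat (unflat x 0%nat) n)).
      split; [apply He|reflexivity].
    + intro n. apply He.
    + apply is_glue_glue, H.
  - apply Fstar_of_mem, reduction_L, L_id; assumption.
Qed.

Lemma decode_onto g : Fstar F g -> exists x, decode x = g.
Proof.
  intros [D [fs [[HD HDp] [Hfs Hg]]]].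
  assert (CA : forall n, exists c, forall y, D n y <-> N0 (e c y)).
  { intro n. destruct (HD n) as [a [Fa Ha]]. destruct (He_onto a Fa) as [c <-].
    exists c. exact Ha. }
  destruct (choice _ CA) as [cA HA].
  destruct (choice _ (fun n => He_onto _ (Hfs n))) as [cF HcF].
  set (x := flat (fun i => match i with 0%nat => flat (fun n => cA n)
                                      | _ => flat (fun n => cF n) end)).
  assert (Hpiece : code_piece x = D).
  { apply functional_extensionality; intro n. apply functional_extensionality; intro y.
    apply propositional_extensionality. unfold code_piece, x.
    rewrite !unflat_flat. symmetry. apply HA. }
  assert (Hfun : code_fun x = fs).
  { apply functional_extensionality; intro n. unfold code_fun, x.
    rewrite !unflat_flat. apply HcF. }
  exists x. unfold decode. destruct excluded_middle_informative as [H|H].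
  - apply (is_glue_unique (code_piece x) (code_fun x)); [apply H|apply is_glue_glue, H|].
    rewrite Hpiece, Hfun. exact Hg.
  - exfalso. apply H. rewrite Hpiece. exact HDp.
Qed.

End Enumeration.

Lemma Fstar_reductions F :
  set_of_reductions F -> Delta_inter_closed F -> set_of_reductions (Fstar F).
Proof.
  intros HF HI. split; [|split].
  - intros f g. apply Fstar_comp; assumption.
  - intros f Hf. apply Fstar_of_mem, reduction_L; assumption.
  - pose proof HF as [_ [_ [e [He He_onto]]]].
    exists (decode e). split.
    + intro x. apply (decode_Fstar F); assumption.
    + intros f Hf. apply (decode_onto F); assumption.
Qed.

Lemma M_Fstar_BAR F : M F -> BAR (Fstar F).
Proof.
  intros [HF [HLip [HB HI]]].
  split; [apply Fstar_reductions; assumption|split; [|split]].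
  - apply Fstar_Bor, HB.
  - intros f Hf. apply Fstar_of_mem, HLip; assumption.
  - intros D f g. apply Fstar_glue; assumption.
Qed.

Lemma BAR_Delta_inter_closed G : BAR G -> Delta_inter_closed G.
Proof.
  intros [HG [_ [_ Hglue]]] A B HA [b [Gb Hb]].
  set (one := fun _ : nat => 1%nat).
  set (h := fun x => if excluded_middle_informative (A x) then b x else one).
  assert (Gh : G h).
  { apply (Hglue (two_pieces A) (fun n => match n with 0%nat => b | _ => fun _ => one end)).
    - apply Delta_partition_two_pieces; assumption.
    - intros [|n]; [exact Gb|apply reduction_L, L_const; assumption].
    - intros [|[|n]] x Hx; simpl in Hx; unfold h;
        destruct excluded_middle_informative; tauto. }
  exists h. split; [exact Gh|]. intro x. unfold h.
  destruct excluded_middle_informative as [H|H].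
  - rewrite <- Hb. tauto.
  - rewrite N0_iff. unfold one. split; [tauto|discriminate].
Qed.

Lemma BAR_M G : BAR G -> M G.
Proof.
  intro H. pose proof (BAR_Delta_inter_closed G H) as HI.
  destruct H as [HG [HB [HLip _]]]. split; [|split; [|split]]; assumption.
Qed.

Lemma Fstar_least F G : BAR G -> fsubset F G -> fsubset (Fstar F) G.
Proof.
  intros [_ [_ [_ Hglue]]] S g [D [fs [[HD HDp] [Hfs Hg]]]].
  apply (Hglue D fs g); [|auto|exact Hg].
  split; [|exact HDp]. intro n. apply (Delta_mono F); auto.
Qed.

Lemma BAR_Fstar_eq G : BAR G -> fseteq (Fstar G) G.
Proof.
  intros HG f. split.
  - apply Fstar_least; [exact HG|intros h Hh; exact Hh].
  - apply Fstar_of_mem, HG.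
Qed.

Theorem theorem6p1 :
  (forall F, M F -> BAR (Fstar F)) /\
  (forall G, BAR G -> exists F, M F /\ fseteq (Fstar F) G) /\
  (forall F, BAR F -> fseteq (Fstar F) F) /\
  (forall F, M F ->
     fsubset F (Fstar F) /\
     (forall G, BAR G -> fsubset F G -> fsubset (Fstar F) G)).
Proof.
  split; [exact M_Fstar_BAR|split; [|split]].
  - intros G HG. exists G. split; [apply BAR_M|apply BAR_Fstar_eq]; exact HG.
  - exact BAR_Fstar_eq.
  - intros F HM. split.
    + apply Fstar_of_mem, HM.
    + intros G HG. apply Fstar_least, HG.
Qed.
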